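(* Let $(E,d_E)$ be a complete metric space and let $(A_n)_{n\ge 1}$ be a sequence of compact fuzzy sets in $E$. 1. Suppose that for every $\alpha\in(0,1]$ and every $n$ we have $A_{n+1}^\alpha\subseteq A_n^\alpha$. Then there is a compact fuzzy set $A$ in $E$ with $A^\alpha=\bigcap_{n\ge1}A_n^\alpha$ for every $\alpha\in(0,1]$, and $A_n\to A$ levelwise. 2. Under the hypothesis of item 1, for every $x\in E$ we have $A_n(x)\to A(x)$, where $A$ is the compact fuzzy set of item 1. 3. If for every $x\in E$ the sequence $(A_n(x))_{n\ge1}$ is non-increasing and converges to $A(x)$, where $A$ is a compact fuzzy set in $E$, then $A_n\to A$ levelwise.
   Context: A (normalized) fuzzy set in a set $\Omega$ is a function $A:\Omega\to[0,1]$ such that $A(x_0)=1$ for some $x_0\in\Omega$. For $\alpha\in(0,1]$ its $\alpha$-cut is $A^\alpha=\{x\in\Omega: A(x)\ge\alpha\}$. A compact fuzzy set in a topological space $E$ is a fuzzy set in $E$ all of whose $\alpha$-cuts, $\alpha\in(0,1]$, are nonempty and compact. $\mathcal K(E)$ denotes the set of nonempty compact subsets of a metric space $(E,d_E)$ with the Hausdorff metric $d_{\mathcal K(E)}(K,L)=\max\big(\sup_{x\in K}\inf_{y\in L}d_E(x,y),\ \sup_{x\in L}\inf_{y\in K}d_E(x,y)\big)$. A sequence $(A_n)$ of compact fuzzy sets converges levelwise to a compact fuzzy set $A$ if for every $\alpha\in(0,1]$, $A_n^\alpha\to A^\alpha$ in $(\mathcal K(E),d_{\mathcal K(E)})$.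 *)

From Stdlib Require Import Reals List.
Open Scope R_scope.

Section MetricDefs.
Variable E : Type.
Variable d : E -> E -> R.

Definition is_metric : Prop :=
  (forall x y, 0 <= d x y) /\
  (forall x y, d x y = 0 <-> x = y) /\
  (forall x y, d x y = d y x) /\
  (forall x y z, d x z <= d x y + d y z).

Definition seq_converges (u : nat -> E) (l : E) : Prop :=
  forall eps, 0 < eps -> exists N, forall n, (N <= n)%nat -> d (u n) l < eps.

Definition cauchy_seq (u : nat -> E) : Prop :=
  forall eps, 0 < eps -> exists N, forall m n, (N <= m)%nat -> (N <= n)%nat ->
    d (u m) (u n) < eps.

Definition complete : Prop :=
  forall u, cauchy_seq u -> exists l, seq_converges u l.

Definition open_set (U : E -> Prop) : Prop :=
  forall x, U x -> exists r, 0 < r /\ forall y, d x y < r -> U y.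

Definition compact_set (K : E -> Prop) : Prop :=
  forall (I : Type) (U : I -> E -> Prop),
    (forall i, open_set (U i)) ->
    (forall x, K x -> exists i, U i x) ->
    exists l : list I, forall x, K x -> exists i, In i l /\ U i x.

Definition nonempty (K : E -> Prop) : Prop := exists x, K x.

(* t is the infimum of { d x y | y in L } *)
Definition is_dist_to_set (x : E) (L : E -> Prop) (t : R) : Prop :=
  is_lub (fun u => exists y, L y /\ u = - d x y) (- t).

Definition excess (K L : E -> Prop) (s : R) : Prop :=
  is_lub (fun t => exists x, K x /\ is_dist_to_set x L t) s.

Definition hausdorff_dist (K L : E -> Prop) (h : R) : Prop :=
  exists s1 s2, excess K L s1 /\ excess L K s2 /\ h = Rmax s1 s2.

Definition hausdorff_converges (Kn : nat -> E -> Prop) (K : E -> Prop) : Prop :=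
  forall eps, 0 < eps -> exists N, forall n, (N <= n)%nat ->
    exists h, hausdorff_dist (Kn n) K h /\ h < eps.

Definition fuzzy_set (A : E -> R) : Prop :=
  (forall x, 0 <= A x <= 1) /\ exists x0, A x0 = 1.

Definition alpha_cut (A : E -> R) (alpha : R) : E -> Prop :=
  fun x => A x >= alpha.

Definition compact_fuzzy_set (A : E -> R) : Prop :=
  fuzzy_set A /\
  forall alpha, 0 < alpha <= 1 ->
    nonempty (alpha_cut A alpha) /\ compact_set (alpha_cut A alpha).

Definition levelwise_converges (An : nat -> E -> R) (A : E -> R) : Prop :=
  forall alpha, 0 < alpha <= 1 ->
    hausdorff_converges (fun n => alpha_cut (An n) alpha) (alpha_cut A alpha).

End MetricDefs.

Arguments is_metric {E}. Arguments complete {E}. Arguments compact_fuzzy_set {E}.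
Arguments alpha_cut {E}. Arguments levelwise_converges {E}. Arguments seq_converges {E}.
Arguments cauchy_seq {E}. Arguments open_set {E}. Arguments compact_set {E}.
Arguments nonempty {E}. Arguments is_dist_to_set {E}. Arguments excess {E}.
Arguments hausdorff_dist {E}. Arguments hausdorff_converges {E}. Arguments fuzzy_set {E}.

From Pilot Require Import Defs.
From Stdlib Require Import Reals List Lra Lia Classical.
Import Pilot.Defs.
Open Scope R_scope.

(* Everything reduces to a statement about sets: if (C_n) is a decreasing
   sequence of nonempty compact subsets of a metric space and C is their
   intersection, then C is nonempty and compact and C_n -> C in the
   Hausdorff metric.  The key point (lemma [eventually_near_intersection]) is
   that for every eps > 0, eventually every point of C_n lies within eps of
   C; this follows from compactness of C_0, covered by the complements of
   the (closed) sets C_n together with the eps-neighbourhood of C.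

   On the fuzzy side, for membership functions with values in [0,1], nested
   alpha-cuts amount to pointwise non-increasing memberships, and the
   alpha-cut of the pointwise limit is the intersection of the alpha-cuts.
   Items 1-2 take A to be the pointwise limit; item 3 is the set statement
   applied cut by cut. *)

Lemma list_pos_lower_bound {A : Type} (f : A -> R) (l : list A) :
  exists r, 0 < r /\ forall z, In z l -> 0 < f z -> r <= f z.
Proof.
  induction l as [|a l [r [Hr Hbound]]].
  - exists 1. split; [lra | intros z []].
  - destruct (Rlt_dec 0 (f a)) as [Ha|Ha].
    + exists (Rmin (f a) r). split; [apply Rmin_glb_lt; lra|].
      intros z [<-|Hz] Hpos; [apply Rmin_l|].
      eapply Rle_trans; [apply Rmin_r | auto].
    + exists r. split; auto. intros z [<-|Hz] Hpos; [contradiction | auto].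
Qed.

Lemma option_list_nat_bound (l : list (option nat)) :
  exists N, forall n, In (Some n) l -> (n <= N)%nat.
Proof.
  induction l as [|a l [N HN]].
  - exists 0%nat. intros n [].
  - destruct a as [m|].
    + exists (Nat.max m N). intros n [Hn|Hn].
      * injection Hn as ->. lia.
      * specialize (HN n Hn). lia.
    + exists N. intros n [Hn|Hn]; [discriminate | auto].
Qed.

Lemma option_list_somes {I : Type} (l : list (option I)) :
  exists l', forall i, In (Some i) l -> In i l'.
Proof.
  induction l as [|a l [l' Hl']].
  - exists nil. intros i [].
  - destruct a as [j|].
    + exists (j :: l'). intros i [Hi|Hi]; [injection Hi as ->; left | right]; auto.
    + exists l'. intros i [Hi|Hi]; [discriminate | auto].
Qed.

Section HausdorffBound.
Variable E : Type.
Variable d : E -> E -> R.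
Hypothesis d_nonneg : forall x y, 0 <= d x y.

Lemma dist_to_set_exists x L : nonempty L -> exists t, is_dist_to_set d x L t.
Proof.
  intros [y0 Hy0].
  destruct (completeness (fun u => exists y, L y /\ u = - d x y)) as [m Hm].
  - exists 0. intros u [y [_ ->]]. specialize (d_nonneg x y). lra.
  - exists (- d x y0); eauto.
  - exists (- m). unfold is_dist_to_set. rewrite Ropp_involutive. exact Hm.
Qed.

Lemma dist_to_set_le x L t y : is_dist_to_set d x L t -> L y -> t <= d x y.
Proof.
  intros [Hub _] Hy. assert (- d x y <= - t) by (apply Hub; eauto). lra.
Qed.

Lemma excess_le K L r : nonempty K -> nonempty L ->
  (forall x, K x -> exists y, L y /\ d x y <= r) ->
  exists s, excess d K L s /\ s <= r.
Proof.
  intros [x0 Hx0] HL Hclose.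
  assert (Hbound : forall t, (exists x, K x /\ is_dist_to_set d x L t) -> t <= r).
  { intros t [x [Kx Ht]]. destruct (Hclose x Kx) as [y [Ly Hy]].
    pose proof (dist_to_set_le x L t y Ht Ly). lra. }
  destruct (completeness (fun t => exists x, K x /\ is_dist_to_set d x L t)) as [s Hs].
  - exists r. exact Hbound.
  - destruct (dist_to_set_exists x0 L HL) as [t Ht]. eauto.
  - exists s. split; [exact Hs | apply (proj2 Hs); exact Hbound].
Qed.

Lemma hausdorff_dist_le K L r : nonempty K -> nonempty L ->
  (forall x, K x -> exists y, L y /\ d x y <= r) ->
  (forall y, L y -> exists x, K x /\ d y x <= r) ->
  exists h, hausdorff_dist d K L h /\ h <= r.
Proof.
  intros HK HL HKL HLK.
  destruct (excess_le K L r HK HL HKL) as [s1 [Hs1 Hle1]].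
  destruct (excess_le L K r HL HK HLK) as [s2 [Hs2 Hle2]].
  exists (Rmax s1 s2). split; [exists s1, s2; auto | apply Rmax_lub; auto].
Qed.
End HausdorffBound.

Section MetricTopology.
Variable E : Type.
Variable d : E -> E -> R.
Hypothesis Hmet : is_metric d.

Lemma d_nonneg x y : 0 <= d x y. Proof. apply Hmet. Qed.
Lemma d_sym x y : d x y = d y x. Proof. apply Hmet. Qed.
Lemma d_triangle x y z : d x z <= d x y + d y z. Proof. apply Hmet. Qed.
Lemma d_refl x : d x x = 0. Proof. apply Hmet. reflexivity. Qed.
Lemma d_eq x y : d x y = 0 -> x = y. Proof. apply Hmet. Qed.

Lemma ball_open z r : open_set d (fun w => d z w < r).
Proof.
  intros x Hx. exists (r - d z x). split; [lra|].
  intros y Hy. pose proof (d_triangle z x y). lra.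
Qed.

Lemma neighbourhood_open (C : E -> Prop) r :
  open_set d (fun x => exists y, C y /\ d x y < r).
Proof.
  intros x [y [Cy Hxy]]. exists (r - d x y). split; [lra|].
  intros z Hz. exists y. split; auto.
  pose proof (d_triangle z x y). rewrite (d_sym z x) in *. lra.
Qed.

(* Compact sets are closed: a point x outside K is separated from K by
   finitely many balls B(z, d(x,z)/2) covering K. *)
Lemma compact_complement_open K : compact_set d K -> open_set d (fun x => ~ K x).
Proof.
  intros HK x Hx.
  destruct (HK E (fun z w => d z w < d x z / 2)) as [l Hl].
  - intros z. apply ball_open.
  - intros y Hy. exists y. rewrite d_refl.
    assert (d x y <> 0) by (intro H; apply d_eq in H; subst; tauto).
    pose proof (d_nonneg x y). lra.
  - destruct (list_pos_lower_bound (fun z => d x z / 2) l) as [r [Hr Hbound]].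
    exists r. split; auto.
    intros y Hxy Ky. destruct (Hl y Ky) as [z [Hz Hzy]].
    assert (Hxz : 0 < d x z / 2) by (pose proof (d_nonneg z y); lra).
    specialize (Hbound z Hz Hxz). pose proof (d_triangle x y z).
    rewrite (d_sym y z) in *. lra.
Qed.

Lemma closed_subset_compact K S : compact_set d K ->
  (forall x, S x -> K x) -> open_set d (fun x => ~ S x) -> compact_set d S.
Proof.
  intros HK HSK HSc I U HU Hcov.
  destruct (HK (option I) (fun i => match i with Some i => U i | None => fun x => ~ S x end))
    as [l Hl].
  - intros [i|]; auto.
  - intros x Kx. destruct (classic (S x)) as [Sx|Sx].
    + destruct (Hcov x Sx) as [i Hi]. exists (Some i); auto.
    + exists None; auto.
  - destruct (option_list_somes l) as [l' Hl']. exists l'.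
    intros x Sx. destruct (Hl x (HSK x Sx)) as [[i|] [Hi Hu]]; [|tauto].
    exists i; auto.
Qed.

Section NestedCompacts.
Variable Cn : nat -> E -> Prop.
Variable C : E -> Prop.
Hypothesis Cn_compact : forall n, compact_set d (Cn n).
Hypothesis Cn_nonempty : forall n, nonempty (Cn n).
Hypothesis Cn_decreasing : forall n x, Cn (S n) x -> Cn n x.
Hypothesis C_intersection : forall x, C x <-> forall n, Cn n x.

Lemma Cn_antitone m n : (m <= n)%nat -> forall x, Cn n x -> Cn m x.
Proof. induction 1; auto. Qed.

Lemma outside_intersection x : ~ C x -> exists n, ~ Cn n x.
Proof.
  intros Hx. apply NNPP. intros Hall. apply Hx, C_intersection.
  intros n. apply NNPP. eauto.
Qed.

Lemma intersection_complement_open : open_set d (fun x => ~ C x).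
Proof.
  intros x Hx. destruct (outside_intersection x Hx) as [n Hn].
  destruct (compact_complement_open _ (Cn_compact n) x Hn) as [r [Hr Hball]].
  exists r. split; auto. intros y Hy Cy. apply (Hball y Hy), C_intersection, Cy.
Qed.

Lemma intersection_compact : compact_set d C.
Proof.
  apply (closed_subset_compact (Cn 0)); auto.
  - intros x Cx. apply C_intersection, Cx.
  - exact intersection_complement_open.
Qed.

(* For every eps > 0, eventually all of C_n lies in the eps-neighbourhood
   of C: the complements of the C_n and this neighbourhood cover C_0. *)
Lemma eventually_near_intersection eps : 0 < eps -> exists N, forall n, (N <= n)%nat ->
  forall x, Cn n x -> exists y, C y /\ d x y < eps.
Proof.
  intros Heps.
  destruct (Cn_compact 0 (option nat)
    (fun i => match i with
              | Some n => fun x => ~ Cn n x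
              | None => fun x => exists y, C y /\ d x y < eps
              end)) as [l Hl].
  - intros [n|]; [apply compact_complement_open; auto | apply neighbourhood_open].
  - intros x _. destruct (classic (C x)) as [Cx|Cx].
    + exists None, x. rewrite d_refl. auto.
    + destruct (outside_intersection x Cx) as [n Hn]. exists (Some n); auto.
  - destruct (option_list_nat_bound l) as [N HN]. exists N.
    intros n Hn x Hx.
    destruct (Hl x (Cn_antitone 0 n ltac:(lia) x Hx)) as [[m|] [Hi Hu]]; [|exact Hu].
    exfalso. apply Hu, (Cn_antitone m n); auto. specialize (HN m Hi). lia.
Qed.

Lemma intersection_nonempty : nonempty C.
Proof.
  destruct (eventually_near_intersection 1 ltac:(lra)) as [N HN].
  destruct (Cn_nonempty N) as [x Hx].
  destruct (HN N (le_n _) x Hx) as [y [Hy _]]. exists y; auto.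
Qed.

(* C is trivially 0-close to each C_n, and eventually C_n is eps/2-close to C. *)
Lemma nested_hausdorff_converges : hausdorff_converges d Cn C.
Proof.
  intros eps Heps. destruct (eventually_near_intersection (eps/2) ltac:(lra)) as [N HN].
  exists N. intros n Hn.
  destruct (hausdorff_dist_le E d d_nonneg (Cn n) C (eps/2) (Cn_nonempty n)
              intersection_nonempty) as [h [Hh Hle]].
  - intros x Hx. destruct (HN n Hn x Hx) as [y [Cy Hy]]. exists y; split; auto; lra.
  - intros y Cy. exists y. split; [apply C_intersection; auto | rewrite d_refl; lra].
  - exists h; split; auto; lra.
Qed.
End NestedCompacts.
End MetricTopology.

Lemma decreasing_limit_ge_iff (u : nat -> R) l a :
  Un_decreasing u -> Un_cv u l -> (l >= a <-> forall n, u n >= a).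
Proof.
  intros Hdec Hcv. split.
  - intros Hl n. pose proof (decreasing_ineq u l Hdec Hcv n). lra.
  - intros Hu. apply Rle_ge, (Rle_cv_lim (Un := fun _ => a) (Vn := u)); auto.
    + intros n. apply Rge_le, Hu.
    + intros eps Heps. exists 0%nat. intros n _.
      unfold Rdist. rewrite Rminus_diag, Rabs_R0. exact Heps.
Qed.

Section FuzzyLimits.
Variable E : Type.
Variable d : E -> E -> R.
Hypothesis Hmet : is_metric d.
Variable An : nat -> E -> R.
Hypothesis An_compact : forall n, compact_fuzzy_set d (An n).

Lemma An_bounds n x : 0 <= An n x <= 1.
Proof. apply (An_compact n). Qed.

(* Nested alpha-cuts for all alpha in (0,1] force pointwise non-increasing
   memberships (test with alpha = A_{n+1}(x)). *)
Lemma nested_cuts_decreasing :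
  (forall alpha, 0 < alpha <= 1 -> forall n x,
     alpha_cut (An (S n)) alpha x -> alpha_cut (An n) alpha x) ->
  forall x, Un_decreasing (fun n => An n x).
Proof.
  intros Hcut x n. simpl.
  destruct (Rle_dec (An (S n) x) 0) as [Hle|Hgt].
  - pose proof (An_bounds n x). lra.
  - pose proof (An_bounds (S n) x).
    assert (Hn : alpha_cut (An n) (An (S n) x) x)
      by (apply Hcut; unfold alpha_cut; lra).
    unfold alpha_cut in Hn. lra.
Qed.

Lemma decreasing_pointwise_limit :
  (forall x, Un_decreasing (fun n => An n x)) ->
  exists A : E -> R, forall x, Un_cv (fun n => An n x) (A x).
Proof.
  intros Hdec.
  assert (Hlb : forall x, has_lb (fun n => An n x)).
  { intros x. exists 0. intros y [n ->]. unfold opp_seq. pose proof (An_bounds n x). lra. }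
  exists (fun x => proj1_sig (decreasing_cv _ (Hdec x) (Hlb x))).
  intros x. exact (proj2_sig (decreasing_cv _ (Hdec x) (Hlb x))).
Qed.

Section PointwiseLimit.
Variable A : E -> R.
Hypothesis An_decreasing : forall x, Un_decreasing (fun n => An n x).
Hypothesis An_cv : forall x, Un_cv (fun n => An n x) (A x).

Lemma limit_cut_intersection alpha x :
  alpha_cut A alpha x <-> (forall n, alpha_cut (An n) alpha x).
Proof. exact (decreasing_limit_ge_iff _ _ alpha (An_decreasing x) (An_cv x)). Qed.

Lemma limit_cut_properties alpha : 0 < alpha <= 1 ->
  nonempty (alpha_cut A alpha) /\ compact_set d (alpha_cut A alpha) /\
  hausdorff_converges d (fun n => alpha_cut (An n) alpha) (alpha_cut A alpha).
Proof.
  intros Halpha.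
  assert (Hcut_compact : forall n, compact_set d (alpha_cut (An n) alpha))
    by (intros n; apply (An_compact n); auto).
  assert (Hcut_nonempty : forall n, nonempty (alpha_cut (An n) alpha))
    by (intros n; apply (An_compact n); auto).
  assert (Hcut_nested : forall n x, alpha_cut (An (S n)) alpha x -> alpha_cut (An n) alpha x).
  { intros n x. unfold alpha_cut. pose proof (An_decreasing x n). simpl in *. lra. }
  repeat split.
  - exact (intersection_nonempty E d Hmet _ _ Hcut_compact Hcut_nonempty Hcut_nested
             (limit_cut_intersection alpha)).
  - exact (intersection_compact E d Hmet _ _ Hcut_compact
             (limit_cut_intersection alpha)).
  - exact (nested_hausdorff_converges E d Hmet _ _ Hcut_compact Hcut_nonempty Hcut_nested
             (limit_cut_intersection alpha)).
Qed.

Lemma limit_compact_fuzzy : compact_fuzzy_set d A.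
Proof.
  assert (Hle1 : forall x, A x <= 1).
  { intros x. pose proof (decreasing_ineq _ _ (An_decreasing x) (An_cv x) 0).
    pose proof (An_bounds 0 x). lra. }
  split; [split|].
  - intros x. split; [|apply Hle1].
    apply Rge_le, (decreasing_limit_ge_iff _ _ 0 (An_decreasing x) (An_cv x)).
    intros n. pose proof (An_bounds n x). lra.
  - destruct (limit_cut_properties 1 ltac:(lra)) as [[x0 Hx0] _].
    exists x0. unfold alpha_cut in Hx0. pose proof (Hle1 x0). lra.
  - intros alpha Halpha. destruct (limit_cut_properties alpha Halpha) as [? [? _]]. auto.
Qed.
End PointwiseLimit.
End FuzzyLimits.

Theorem mainTheorem1 (E : Type) (d : E -> E -> R)
  (Hmet : is_metric d) (Hcomplete : complete d) :
  (* items 1 and 2 *)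
  (forall An : nat -> E -> R,
     (forall n, compact_fuzzy_set d (An n)) ->
     (forall alpha, 0 < alpha <= 1 -> forall n x,
        alpha_cut (An (S n)) alpha x -> alpha_cut (An n) alpha x) ->
     exists A : E -> R,
       compact_fuzzy_set d A /\
       (forall alpha, 0 < alpha <= 1 -> forall x,
          alpha_cut A alpha x <-> (forall n, alpha_cut (An n) alpha x)) /\
       levelwise_converges d An A /\
       (forall x, Un_cv (fun n => An n x) (A x)))
  /\
  (* item 3 *)
  (forall (An : nat -> E -> R) (A : E -> R),
     (forall n, compact_fuzzy_set d (An n)) ->
     compact_fuzzy_set d A ->
     (forall x, Un_decreasing (fun n => An n x) /\ Un_cv (fun n => An n x) (A x)) ->
     levelwise_converges d An A).
Proof.
  split.
  - intros An Hcompact Hcut.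
    pose proof (nested_cuts_decreasing E d An Hcompact Hcut) as Hdec.
    destruct (decreasing_pointwise_limit E d An Hcompact Hdec) as [A Hcv].
    exists A. split; [|split; [|split]].
    + exact (limit_compact_fuzzy E d Hmet An Hcompact A Hdec Hcv).
    + intros alpha _ x. apply (limit_cut_intersection E An A Hdec Hcv).
    + intros alpha Halpha. apply (limit_cut_properties E d Hmet An Hcompact A Hdec Hcv alpha Halpha).
    + exact Hcv.
  - intros An A Hcompact _ Hx alpha Halpha.
    apply (limit_cut_properties E d Hmet An Hcompact A (fun x => proj1 (Hx x))
             (fun x => proj2 (Hx x)) alpha Halpha).
Qed.
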